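(* Let $\{a_n\}_{n\in\mathbb Z}$ be i.i.d. random variables with values in $\{1,2,\dots\}$ with $\mathbb E[a_0]<\infty$, and let $N_0=\#\{m\in\mathbb Z: m<0,\ m+a_m>0\}+1$. Then for all $t\in\mathbb R$, $$\mathbb E[e^{tN_0}]=e^{t}\prod_{i=1}^{\infty}\left(e^{t}\,\mathbb P[a_0>i]+\mathbb P[a_0\le i]\right),$$ and $\mathbb E[e^{tN_0}]<\infty$ for all $t\in\mathbb R$. *)

From HB Require Import structures.
From mathcomp Require Import all_boot all_order all_algebra.
From mathcomp Require Import all_classical all_reals all_analysis.
Set Implicit Arguments. Unset Strict Implicit. Unset Printing Implicit Defensive.
Import Order.TTheory GRing.Theory Num.Theory.
Local Open Scope classical_set_scope.
Local Open Scope ring_scope.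

(* X : T -> nat is a (discrete) random variable: every level set is an event;
   hence every preimage X @^-1` B (B : set nat, a countable union) is an event. *)
Definition nat_rv d (T : measurableType d) (X : T -> nat) : Prop :=
  forall k : nat, measurable (X @^-1` [set k]).

Definition mutually_independent d (T : measurableType d) (R : realType)
  (P : probability T R) (a : int -> T -> nat) : Prop :=
  forall (s : seq int) (B : int -> set nat), uniq s ->
    P (\big[setI/setT]_(i <- s) (a i @^-1` B i)) =
    (\prod_(i <- s) P (a i @^-1` B i))%E.

Definition identically_distributed d (T : measurableType d) (R : realType)
  (P : probability T R) (a : int -> T -> nat) : Prop :=
  forall (n : int) (B : set nat), P (a n @^-1` B) = P (a 0 @^-1` B).

(* N_0 = #{ m in Z : m < 0, m + a_m > 0 } + 1, as an extended real
   (the cardinality is counted with esum; it is +oo if the set is infinite). *)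
Definition N0 d (T : measurableType d) (R : realType) (a : int -> T -> nat)
  (x : T) : \bar R :=
  ((\esum_(m in [set m : int | ((m < 0) /\ (0 < m + (a m x)%:Z))%R]) 1) + 1)%E.

From HB Require Import structures.
From mathcomp Require Import all_boot all_order all_algebra.
From mathcomp Require Import all_classical all_reals all_analysis.
From mathcomp Require Import measurable_realfun zify ring lra.
Import Order.TTheory GRing.Theory Num.Theory numFieldNormedType.Exports.
Local Open Scope classical_set_scope.
Local Open Scope ring_scope.
Set Implicit Arguments. Unset Strict Implicit. Unset Printing Implicit Defensive.

(** Let K_n count the sites m in {-n, ..., -1} with m + a_m > 0, so that K_n
   increases to N_0 - 1. The variable exp(t (K_n + 1)) is e^t times the product
   over i <= n of the independent factors e^(t [a_(-i) > i]), whose expectations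
   are e^t P[a_0 > i] + P[a_0 <= i]. For t >= 0 monotone convergence passes to
   the limit, and 1 + x <= e^x together with sum_i P[a_0 > i] <= E[a_0] bounds
   the partial products by exp((e^t - 1) E[a_0]); for t < 0 the integrands are
   bounded by e^t and dominated convergence applies. *)

Section cvg_expeR.
Context {R : realType} {I : Type} {F : set_system I} {FF : Filter F}.
Local Open Scope ereal_scope.

Lemma cvg_expeR (f : I -> \bar R) (l : \bar R) :
  f @ F --> l -> expeR (f x) @[x --> F] --> expeR l.
Proof.
case: l => [r||] fl /=.
- move/fine_cvgP : fl => [ffin fr]; apply/fine_cvgP; split.
    by apply: filterS ffin => x; case: (f x).
  have := cvg_comp _ _ fr (@continuous_expR R r); apply: cvg_trans.
  by apply: near_eq_cvg; apply: filterS ffin => x /=; case: (f x).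
- apply/cvgeyPge => A; apply: filterS (cvgey_ge fl A) => x Afx.
  by rewrite (le_trans _ (expeR_ge1Dx _)) // lee_paddl.
- apply/fine_cvgP; split; first by apply: filterS (cvgeNy_lt fl 0) => x; case: (f x).
  apply/cvgr0Pnorm_lt => e e0; apply: filterS (cvgeNy_lt fl (ln e)) => x /=.
  case: (f x) => [s|//|] /=; last by rewrite normr0.
  by rewrite lte_fin ger0_norm ?expR_ge0 // -ltr_expR lnK.
Qed.

End cvg_expeR.

Lemma indic_bigsetI (T I : Type) (R : realType) (r : seq I) (A : I -> set T) (x : T) :
  \1_(\big[setI/setT]_(i <- r) A i) x = \prod_(i <- r) (\1_(A i) x : R).
Proof.
elim: r => [|i r IH]; first by rewrite !big_nil indicT.
by rewrite !big_cons -IH indicI.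
Qed.

Lemma sum_indic_level (T : Type) (K : finType) (R : realType)
    (c : T -> K) (w : K -> R) (x : T) :
  \sum_(k : K) w k * \1_[set y | c y = k] x = w (c x).
Proof.
rewrite (bigD1 (c x)) //= indicE mem_set // mulr1 big1 ?addr0 // => k ck.
by rewrite indicE memNset ?mulr0 //= => ckx; rewrite ckx eqxx in ck.
Qed.

Lemma sum_ltn_leq (n k : nat) : (\sum_(i < n) (i < k) <= k)%N.
Proof.
suff : (\sum_(i < n) (i < k) <= minn n k)%N by move/leq_trans; apply; exact: geq_minr.
elim: n => [|n IH]; first by rewrite big_ord0.
rewrite big_ord_recr /=; move: IH; move: (\sum_(i < n) _)%N => S.
by case: ltnP => /=; lia.
Qed.

Section nat_random_variable.
Context d (T : measurableType d) (R : realType) (P : probability T R).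
Variable X : T -> nat.
Hypothesis X_rv : nat_rv X.

Lemma nat_rv_preimage (B : set nat) : measurable (X @^-1` B).
Proof.
have -> : X @^-1` B = \bigcup_(k in B) X @^-1` [set k].
  by apply/seteqP; split => [x Bx|x [k Bk /= ->]] //; exists (X x).
exact: bigcup_measurable.
Qed.

Lemma measurable_fun_nat_rv (g : nat -> R) : measurable_fun setT (g \o X).
Proof. by move=> _ Y _; rewrite setTI; exact: (nat_rv_preimage (g @^-1` Y)). Qed.

Lemma fine_probability_leqn (i : nat) :
  fine (P [set x | (X x <= i)%N]) = 1 - fine (P [set x | (i < X x)%N]).
Proof.
have -> : [set x | (X x <= i)%N] = ~` [set x | (i < X x)%N].
  by apply/seteqP; split => x /=; rewrite ltnNge; case: (X x <= i)%N => // /(_ isT).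
have mA : measurable [set x | (i < X x)%N] by exact: (nat_rv_preimage [set k | (i < k)%N]).
by rewrite probability_setC // fineB // fin_num_measure.
Qed.

Local Open Scope ereal_scope.

Lemma sum_tail_le_expectation (n : nat) :
  \sum_(i < n) P [set x | (i < X x)%N] <= \int[P]_x ((X x)%:R : R)%:E.
Proof.
have mA i : measurable [set x | (i < X x)%N] by exact: (nat_rv_preimage [set k | (i < k)%N]).
have mAi i : measurable_fun setT (fun x => (\1_[set x | (i < X x)%N] x : R)%:E).
  exact/measurable_EFinP/measurable_indic.
under eq_bigr => i _ do rewrite -(setIT [set x | (i < X x)%N]) -integral_indic //.
rewrite -(ge0_integral_sum _ measurableT (fun i : 'I_n => mAi i)); last first.
  by move=> i x _; rewrite lee_fin.
apply: ge0_le_integral => //.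
- by move=> x _; apply: sume_ge0 => i _; rewrite lee_fin.
- exact: emeasurable_sum.
- exact/measurable_EFinP/(measurable_fun_nat_rv (fun k => k%:R)).
move=> x _; rewrite sumEFin lee_fin.
have -> : (\sum_(i < n) \1_[set x | (i < X x)%N] x = (\sum_(i < n) (i < X x)%N)%:R :> R)%R.
  rewrite natr_sum; apply: eq_bigr => i _; rewrite indicE.
  by congr ((nat_of_bool _)%:R); apply/idP/idP => [/set_mem|/mem_set].
by rewrite ler_nat sum_ltn_leq.
Qed.

Local Close Scope ereal_scope.

Definition tail_mgf (t : R) (i : nat) : R :=
  expR t * fine (P [set x | (i < X x)%N]) + fine (P [set x | (X x <= i)%N]).

Lemma tail_mgf_le_expR (t : R) (i : nat) : 0 <= t ->
  tail_mgf t i <= expR ((expR t - 1) * fine (P [set x | (i < X x)%N])).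
Proof.
move=> t_ge0; rewrite /tail_mgf fine_probability_leqn.
by rewrite (_ : _ + _ = 1 + (expR t - 1) * fine (P [set x | (i < X x)%N])) ?expR_ge1Dx //; ring.
Qed.

Lemma prod_tail_mgf_le (t : R) (n : nat) : 0 <= t ->
  (\int[P]_x ((X x)%:R : R)%:E < +oo)%E ->
  \prod_(i < n) tail_mgf t i.+1 <= expR ((expR t - 1) * fine (\int[P]_x ((X x)%:R : R)%:E)).
Proof.
move=> t_ge0 X_int.
have mA i : measurable [set x | (i < X x)%N] by exact: (nat_rv_preimage [set k | (i < k)%N]).
have EX_fin : (\int[P]_x ((X x)%:R : R)%:E)%E \is a fin_num.
  by rewrite ge0_fin_numE // integral_ge0 // => x _; rewrite lee_fin.
apply: (@le_trans _ _ (\prod_(i < n) expR ((expR t - 1) * fine (P [set x | (i.+1 < X x)%N])))).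
  apply: ler_prod => i _; rewrite tail_mgf_le_expR // andbT.
  by rewrite addr_ge0 ?mulr_ge0 ?expR_ge0 ?fine_ge0.
rewrite -expR_sum ler_expR -mulr_sumr ler_wpM2l //.
  by rewrite subr_ge0 (le_trans _ (expR_ge1Dx t)) // lerDl.
rewrite -lee_fin -sumEFin fineK //; apply: le_trans (sum_tail_le_expectation n.+1).
rewrite big_ord_recl /= lee_paddl //; apply: lee_sum => i _.
by rewrite fineK ?fin_num_measure.
Qed.

End nat_random_variable.

Section independent_family.
Context d (T : measurableType d) (R : realType) (P : probability T R).
Variable a : int -> T -> nat.
Hypotheses (a_rv : forall m, nat_rv (a m)) (a_indep : mutually_independent P a).

Lemma independent_bigsetI n (j : 'I_n -> int) (A : 'I_n -> set nat) :
  injective j ->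
  P (\big[setI/setT]_(i < n) a (j i) @^-1` A i) =
  (\prod_(i < n) P (a (j i) @^-1` A i))%E.
Proof.
move=> j_inj.
pose B m := if [pick i | j i == m] is Some i then A i else setT.
have BjE i : B (j i) = A i.
  by rewrite /B; case: pickP => [k /eqP/j_inj -> //|/(_ i)]; rewrite eqxx.
have j_uniq : uniq (map j (index_enum 'I_n)) by rewrite map_inj_uniq ?index_enum_uniq.
have := @a_indep _ B j_uniq; rewrite !big_map.
by under eq_bigr do rewrite BjE; under [in X in _ = X -> _]eq_bigr do rewrite BjE.
Qed.

Lemma expectation_independent_prod (K : finType) n (j : 'I_n -> int)
    (c : 'I_n -> nat -> K) (w : 'I_n -> K -> R) :
  injective j -> (forall i k, 0 <= w i k) ->
  (\int[P]_x (\prod_(i < n) w i (c i (a (j i) x)))%:E =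
  (\prod_(i < n) \sum_(k : K) w i k * fine (P [set x | c i (a (j i) x) = k]))%:E)%E.
Proof.
move=> j_inj w_ge0.
pose C (f : {ffun 'I_n -> K}) := \big[setI/setT]_(i < n) [set x | c i (a (j i) x) = f i].
have mC f : measurable (C f).
  by apply: bigsetI_measurable => i _; exact: (nat_rv_preimage (a_rv (j i)) (c i @^-1` [set f i])).
have w_prod_ge0 f : 0 <= \prod_(i < n) w i (f i) by apply: prodr_ge0.
transitivity (\int[P]_x (\sum_(f : {ffun 'I_n -> K})
    ((\prod_(i < n) w i (f i))%:E * (\1_(C f) x)%:E)))%E.
  apply: eq_integral => x _; under eq_bigr do rewrite -sum_indic_level.
  rewrite bigA_distr_bigA sumEFin; congr (_%:E).
  by apply: eq_bigr => f _; rewrite big_split /= indic_bigsetI.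
rewrite ge0_integral_sum //; last 2 first.
- by move=> f; apply: measurable_funeM; exact/measurable_EFinP/measurable_indic.
- by move=> f x _; rewrite -EFinM lee_fin mulr_ge0.
rewrite bigA_distr_bigA -sumEFin; apply: eq_bigr => f _.
rewrite ge0_integralZl_EFin //; last exact/measurable_EFinP/measurable_indic.
rewrite integral_indic // setIT big_split /= EFinM; congr (_ * _)%E.
rewrite -prodEFin; etransitivity.
  exact: (@independent_bigsetI n j (fun i => c i @^-1` [set f i]) j_inj).
apply: eq_bigr => i _; rewrite fineK // fin_num_measure //.
exact: (nat_rv_preimage (a_rv (j i)) (c i @^-1` [set f i])).
Qed.

End independent_family.

Section cover_count.
Context d (T : measurableType d) (R : realType).
Variable a : int -> T -> nat.

Definition negS (i : nat) : int := - (i.+1)%:Z.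

Lemma negS_inj : injective negS.
Proof. by move=> i k /eqP; rewrite eqr_opp eqz_nat eqSS => /eqP. Qed.

Definition cover_count (n : nat) (x : T) : nat := \sum_(i < n) (i.+1 < a (negS i) x).

Lemma cover_count_nondecreasing x : {homo cover_count ^~ x : m n / (m <= n)%N}.
Proof.
apply: homo_leq => [//|m n p|n]; first exact: leq_trans.
by rewrite /cover_count big_ord_recr leq_addr.
Qed.

Lemma cvg_cover_count x : ((cover_count n x)%:R + 1)%:E @[n --> \oo] --> N0 R a x.
Proof.
have covered : [set m : int | (m < 0) /\ (0 < m + (a m x)%:Z)] =
    negS @` [set i | (i.+1 < a (negS i) x)%N].
  apply/seteqP; split => [m /= [m_lt0 cov]|_ [i /= cov <-]].
    have m_negS : negS `|m|.-1 = m by rewrite /negS; lia.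
    by exists `|m|.-1; rewrite /= m_negS //; lia.
  by rewrite /negS in cov *; split; lia.
rewrite /N0 covered esum_image; last by move=> i k _ _; exact: negS_inj.
rewrite -nneseries_esum //; under eq_fun do rewrite EFinD.
apply: cvgeD; [exact: fin_num_adde_defl | | exact: cvg_cst].
have -> : (fun n => ((cover_count n x)%:R : R)%:E) =
    (fun n => \sum_(0 <= i < n | (i.+1 < a (negS i) x)%N) 1%E).
  apply/funext => n; rewrite big_mkord /cover_count natr_sum -sumEFin [RHS]big_mkcond.
  by apply: eq_bigr => i _; case: ifP.
exact: is_cvg_nneseries_cond.
Qed.

Lemma expR_cover_count (t : R) n x :
  expR (t * ((cover_count n x)%:R + 1)) =
  expR t * \prod_(i < n) expR t ^+ (i.+1 < a (negS i) x).
Proof. by rewrite prodrXr -expRM_natl -expRD mulrDr mulr1 addrC mulrC. Qed.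

End cover_count.

Section mgf_N0.
Context d (T : measurableType d) (R : realType) (P : probability T R).
Variable a : int -> T -> nat.
Hypotheses (a_rv : forall n, nat_rv (a n)) (a_indep : mutually_independent P a).
Hypothesis a_id : identically_distributed P a.
Variable t : R.

Let mgf_trunc n x : \bar R := (expR (t * ((cover_count a n x)%:R + 1)))%:E.

Lemma measurable_cover_prod n :
  measurable_fun setT (fun x => \prod_(i < n) expR t ^+ (i.+1 < a (negS i) x)).
Proof.
apply: measurable_prod => i _.
exact: (measurable_fun_nat_rv (a_rv _) (fun k => expR t ^+ (i.+1 < k)%N)).
Qed.

Lemma measurable_mgf_trunc n : measurable_fun setT (mgf_trunc n).
Proof.
apply/measurable_EFinP; rewrite /comp.
under eq_fun do rewrite expR_cover_count.
exact: measurable_funM (measurable_cst _) (measurable_cover_prod n).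
Qed.

Lemma expectation_mgf_trunc n :
  (\int[P]_x mgf_trunc n x = (expR t * \prod_(i < n) tail_mgf P (a 0) t i.+1)%:E)%E.
Proof.
have negS_ord_inj : injective (fun i : 'I_n => negS i).
  by move=> i k /negS_inj /val_inj.
under eq_integral do rewrite /mgf_trunc expR_cover_count EFinM.
rewrite ge0_integralZl_EFin //; last 2 first.
- by move=> x _; rewrite lee_fin prodr_ge0 // => i _; rewrite exprn_ge0 ?expR_ge0.
- exact/measurable_EFinP/measurable_cover_prod.
rewrite (expectation_independent_prod a_rv a_indep (fun i k => (i.+1 < k)%N)
  (w := fun _ b => expR t ^+ b) negS_ord_inj); last by move=> i b; rewrite exprn_ge0 ?expR_ge0.
rewrite -EFinM; congr (_ * _)%:E; apply: eq_bigr => i _.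
rewrite big_bool /= expr1 expr0 mul1r /tail_mgf.
have a_negS_id (b : bool) :
    P [set x | (i.+1 < a (negS i) x)%N = b] = P [set x | (i.+1 < a 0 x)%N = b].
  exact: (@a_id (negS i) [set k | (i.+1 < k)%N = b]).
rewrite !a_negS_id; congr (_ + fine (P _)).
by apply/seteqP; split => x /=; rewrite ltnNge; [move/negbFE | move=> ->].
Qed.

Lemma cvg_mgf_trunc x : mgf_trunc n x @[n --> \oo] --> expeR (t%:E * N0 R a x).
Proof.
have -> : (fun n => mgf_trunc n x) =
  (fun n => expeR (t%:E * ((cover_count a n x)%:R + 1)%:E)) by [].
exact: cvg_expeR (cvgeZl (y := t%:E) isT (@cvg_cover_count _ _ R a x)).
Qed.

Local Notation mgf_N0 := (\int[P]_x expeR (t%:E * N0 R a x))%E.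

Lemma cvg_expectation_mgf_trunc_ge0 :
  (\int[P]_x ((a 0 x)%:R : R)%:E < +oo)%E -> 0 <= t ->
  (\int[P]_x mgf_trunc n x)%E @[n --> \oo] --> mgf_N0 /\ mgf_N0 \is a fin_num.
Proof.
move=> a_int t_ge0.
have mgf_ge0 n x : (0 <= mgf_trunc n x)%E by rewrite lee_fin expR_ge0.
have mgf_nd x : {homo mgf_trunc ^~ x : m n / (m <= n)%N >-> (m <= n)%E}.
  move=> m n mn; rewrite lee_fin ler_expR ler_wpM2l // lerD2r ler_nat.
  exact: cover_count_nondecreasing.
have := cvg_monotone_convergence (mu := P) measurableT measurable_mgf_trunc
  (fun n x _ => mgf_ge0 n x) (fun x _ => mgf_nd x).
have -> : (fun x => limn (mgf_trunc ^~ x)) = (fun x => expeR (t%:E * N0 R a x)).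
  by apply/funext => x; apply: cvg_lim => //; exact: cvg_mgf_trunc.
move=> E_cvg; split => //.
rewrite ge0_fin_numE ?integral_ge0 // => [|x _]; last exact: expeR_ge0.
rewrite -(cvg_lim _ E_cvg) //; apply: (@le_lt_trans _ _
  (expR t * expR ((expR t - 1) * fine (\int[P]_x ((a 0 x)%:R : R)%:E)))%:E); last exact: ltry.
apply: lime_le; first by apply/cvg_ex; exists mgf_N0.
apply: nearW => n; rewrite expectation_mgf_trunc lee_fin ler_wpM2l ?expR_ge0 //.
exact: prod_tail_mgf_le.
Qed.

Lemma cvg_expectation_mgf_trunc_lt0 : t < 0 ->
  (\int[P]_x mgf_trunc n x)%E @[n --> \oo] --> mgf_N0 /\ mgf_N0 \is a fin_num.
Proof.
move=> t_lt0.
have mN0 : measurable_fun setT (fun x => expeR (t%:E * N0 R a x)).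
  exact: (emeasurable_fun_cvg _ _ measurable_mgf_trunc (fun x _ => @cvg_mgf_trunc x)).
have mgf_le n x : (`|mgf_trunc n x| <= (EFin \o cst (expR t)) x)%E.
  rewrite gee0_abs ?lee_fin ?expR_ge0 //= ler_expR.
  have : 0 <= (cover_count a n x)%:R :> R by [].
  by nra.
have [mgf_int _ E_cvg] := dominated_convergence measurableT measurable_mgf_trunc mN0
  (aeW _ (fun x _ => @cvg_mgf_trunc x)) (finite_measure_integrable_cst P (expR t) measurableT)
  (aeW _ (fun x n _ => mgf_le n x)).
by split; [exact: E_cvg | exact: integrable_fin_num mgf_int].
Qed.

Lemma cvg_mgf_partial_products :
  (\int[P]_x ((a 0 x)%:R : R)%:E < +oo)%E ->
  (expR t * \prod_(i < n) tail_mgf P (a 0) t i.+1)%:E @[n --> \oo] --> mgf_N0 /\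
  mgf_N0 \is a fin_num.
Proof.
move=> a_int; under eq_fun do rewrite -expectation_mgf_trunc.
have [t_ge0|t_lt0] := leP 0 t.
- exact: cvg_expectation_mgf_trunc_ge0.
- exact: cvg_expectation_mgf_trunc_lt0.
Qed.

End mgf_N0.

Theorem mainTheorem4 (d : measure_display) (T : measurableType d) (R : realType)
  (P : probability T R) (a : int -> T -> nat)
  (a_rv : forall n, nat_rv (a n))
  (a_indep : mutually_independent P a)
  (a_id : identically_distributed P a)
  (a_pos : forall n x, (0 < a n x)%N)
  (a_int : (\int[P]_x ((a 0 x)%:R : R)%:E < +oo)%E) :
  forall t : R,
    exists L : R,
      (fun n : nat => \prod_(1 <= i < n.+1)
          (expR t * fine (P [set x | (i < a 0 x)%N])
           + fine (P [set x | (a 0 x <= i)%N])) : R) @ \oo --> L /\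
      (\int[P]_x expeR (t%:E * N0 R a x))%E = (expR t * L)%:E /\
      (\int[P]_x expeR (t%:E * N0 R a x) < +oo)%E.
Proof.
move=> t; set I := (\int[P]_x expeR (t%:E * N0 R a x))%E.
pose U n := \prod_(i < n) tail_mgf P (a 0) t i.+1.
have -> : (fun n => \prod_(1 <= i < n.+1) (expR t * fine (P [set x | (i < a 0 x)%N])
    + fine (P [set x | (a 0 x <= i)%N]))) = U.
  by apply/funext => n; rewrite big_add1 big_mkord.
have [E_cvg I_fin] := cvg_mgf_partial_products a_rv a_indep a_id t a_int.
have EU_cvg : (fun n => expR t * U n) @ \oo --> fine I.
  by apply: (@fine_cvg _ _ _ _ (fun n => (expR t * U n)%:E)); rewrite fineK.
have expRt_neq0 : expR t != 0 by rewrite gt_eqF ?expR_gt0.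
exists (fine I / expR t); split; last split.
- have -> : U = (fun n => expR t * U n / expR t).
    by apply/funext => n; rewrite mulrAC divff ?mul1r.
  exact: cvgM EU_cvg (cvg_cst _).
- by rewrite mulrCA divff ?mulr1 ?fineK.
- by rewrite ltey_eq I_fin.
Qed.
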